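(* Let $a<b$ be two $n$-bit integers. Then $\Pr[I(a,b,\vec e_{\mathsf a})]<\frac{8}{b-a}$.
   Context: Bits of $n$-bit integers are indexed $1$ (least significant) to $n$ (most significant). For an energy vector $\vec e=(e_1,\dots,e_n)$, an inexact comparison of $u,v$ reads each bit $j$ of $u$ and of $v$ independently, flipped with probability $2^{-e_j}$, and orders $u,v$ by the read values (the most significant bit at which the read values differ). $I(u,v,\vec e)$ is the event that this comparison gives the wrong order. $\vec e_{\mathsf a}=(1,2,\dots,n)$, i.e. bit $j$ gets energy $j$ and is flipped with probability $2^{-j}$. *)

From mathcomp Require Import all_boot all_order all_algebra.
Set Implicit Arguments. Unset Strict Implicit. Unset Printing Implicit Defensive.
Import Order.TTheory GRing.Theory Num.Theory.
Local Open Scope ring_scope.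

(* Bit j (0-indexed, j < n) of the n-bit integer x; paper's bit index is j+1. *)
Definition bit (x j : nat) : bool := odd (x %/ 2 ^ j).

Definition read (n : nat) (x : nat) (f : {ffun 'I_n -> bool}) : nat :=
  (\sum_(j < n) (bit x j (+) f j) * 2 ^ j)%N.

Definition pat_prob (R : realFieldType) (n : nat) (p : 'I_n -> R)
    (f : {ffun 'I_n -> bool}) : R :=
  \prod_(j < n) (if f j then p j else 1 - p j).

(* Flip probability 2^{-e_j} for energy vector e (e j = energy of bit j+1). *)
Definition flipp (R : realFieldType) (n : nat) (e : 'I_n -> nat) (j : 'I_n) : R :=
  (2 ^+ e j)^-1.

(* Pr[I(u,v,e)] for u < v : probability that the inexact comparison puts
   u above v, i.e. read(u) > read(v) (ordering by the most significant
   differing bit of the read values = numeric order of the read values). *)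
Definition PrI (R : realFieldType) (n : nat) (u v : nat) (e : 'I_n -> nat) : R :=
  \sum_(fu : {ffun 'I_n -> bool}) \sum_(fv : {ffun 'I_n -> bool})
     (if (read v fv < read u fu)%N then pat_prob (flipp R e) fu * pat_prob (flipp R e) fv else 0).

Definition e_a (n : nat) (j : 'I_n) : nat := (j + 1)%N.

From mathcomp Require Import all_boot all_order all_algebra.
From mathcomp Require Import zify ring.
Import Order.TTheory GRing.Theory Num.Theory.

Set Implicit Arguments.
Unset Strict Implicit.
Unset Printing Implicit Defensive.

(* Choose m with 2^(m+1) <= b - a < 2^(m+2).  A read that flips only bits
   of (0-based) index < m moves its value by less than 2^m, so if neither
   read flips a bit of index >= m the comparison is correct.  Under e_a bit j
   flips with probability 2^-(j+1), so by the union bound a read flips such a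
   bit with probability < 2^-m, and the error probability is
   < 2^(1-m) = 8/2^(m+2) <= 8/(b-a). *)

Lemma sum_bits x k : (\sum_(j < k) bit x j * 2 ^ j)%N = x %% 2 ^ k.
Proof.
elim: k x => [|k IH] x; first by rewrite big_ord0 modn1.
rewrite big_ord_recl /bit divn1 muln1.
under eq_bigr => j _ do rewrite /bump /= expnS divnMA mulnCA.
rewrite -big_distrr /= IH expnS divn2 -[in RHS](odd_double_half x).
rewrite -modnDmr -mul2n -muln_modr [RHS]modn_small //.
have := ltn_mod x./2 (2 ^ k); rewrite expn_gt0 /=; case: (odd x); lia.
Qed.

Lemma sum_bits_small n x : (x < 2 ^ n)%N -> x = (\sum_(j < n) bit x j * 2 ^ j)%N.
Proof. by move=> xn; rewrite sum_bits modn_small. Qed.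

Lemma sum_pow2_lt m : (\sum_(j < m) 2 ^ j < 2 ^ m)%N.
Proof. by have := predn_exp 2 m; rewrite mul1n => <-; rewrite ltn_predL expn_gt0. Qed.

Section ReadValues.
Variable n : nat.
Implicit Types (x : nat) (f : {ffun 'I_n -> bool}).

Definition flip_weight f := (\sum_(j < n) f j * 2 ^ j)%N.

Definition high_flip m f := [exists j : 'I_n, (m <= j)%N && f j].

Lemma read_le_add_weight x f : (x < 2 ^ n)%N -> (read x f <= x + flip_weight f)%N.
Proof.
move=> /sum_bits_small {2}->; rewrite /read /flip_weight -big_split /=.
by apply: leq_sum => j _; case: (bit x j); case: (f j);
  rewrite /= ?mul1n ?mul0n ?addn0 ?leq_addr.
Qed.

Lemma le_read_add_weight x f : (x < 2 ^ n)%N -> (x <= read x f + flip_weight f)%N.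
Proof.
move=> /sum_bits_small {1}->; rewrite /read /flip_weight -big_split /=.
by apply: leq_sum => j _; case: (bit x j); case: (f j);
  rewrite /= ?mul1n ?mul0n ?addn0 ?leq_addr.
Qed.

Lemma flip_weight_lt m f : (m <= n)%N -> ~~ high_flip m f -> (flip_weight f < 2 ^ m)%N.
Proof.
move=> mn /existsPn f_low; apply: leq_ltn_trans (sum_pow2_lt m).
rewrite (big_ord_widen n (fun j => 2 ^ j)%N mn) big_mkcond /=.
apply: leq_sum => j _; have := f_low j.
by case: (ltnP j m); case: (f j); rewrite ?mul1n ?mul0n.
Qed.

Lemma read_lt_of_gap a b m fu fv : (b < 2 ^ n)%N -> (a + 2 ^ m.+1 <= b)%N ->
  ~~ high_flip m fu -> ~~ high_flip m fv -> (read a fu < read b fv)%N.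
Proof.
move=> bn gap low_u low_v.
rewrite expnS in gap.
have an : (a < 2 ^ n)%N by lia.
have /ltnW mn : (m < n)%N by rewrite -(ltn_exp2l _ _ (ltnSn 1)); lia.
have := read_le_add_weight fu an; have := le_read_add_weight fv bn.
have := flip_weight_lt mn low_u; have := flip_weight_lt mn low_v.
lia.
Qed.

End ReadValues.

Local Open Scope ring_scope.

Section FlipPatterns.
Variables (R : realFieldType) (n : nat) (p : 'I_n -> R).
Hypothesis p_prob : forall j, 0 <= p j <= 1.
Local Notation P := (pat_prob p).

Definition prob (A : pred {ffun 'I_n -> bool}) : R := \sum_(f | A f) P f.

Lemma pat_prob_ge0 f : 0 <= P f.
Proof.
apply: prodr_ge0 => j _; have /andP[p_ge0 p_le1] := p_prob j.
by case: (f j); rewrite ?subr_ge0.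
Qed.

Lemma sum_pat_prob : \sum_f P f = 1.
Proof.
rewrite -(bigA_distr_bigA (fun j (b : bool) => if b then p j else 1 - p j)) /=.
by apply: big1 => j _; rewrite big_bool /= addrC subrK.
Qed.

Lemma prob_flip j0 : prob (fun f => f j0) = p j0.
Proof.
pose Q j := if j == j0 then pred1 true else predT.
rewrite /prob (eq_bigl (fun f => f \in family Q)); last first.
  move=> f; apply/idP/familyP => [f_j0 j | /(_ j0)]; rewrite /Q.
    by case: eqP => [-> | _]; rewrite inE ?f_j0.
  by rewrite eqxx inE => /eqP.
rewrite -(bigA_distr_big_dep Q (fun j (b : bool) => if b then p j else 1 - p j)).
rewrite (bigD1 j0) //= [X in _ * X]big1 => [|j /negbTE j_neq].
  by rewrite mulr1 /Q eqxx big_pred1_eq.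
by rewrite /Q j_neq big_bool /= addrC subrK.
Qed.

Lemma prob_high_flip_le m : prob (high_flip m) <= \sum_(j < n | (m <= j)%N) p j.
Proof.
pose flips_from (f : {ffun 'I_n -> bool}) :=
  \sum_(j < n | (m <= j)%N) (if f j then P f else 0).
apply: (@le_trans _ _ (\sum_f flips_from f)).
  rewrite /prob big_mkcond /=; apply: ler_sum => f _; rewrite /flips_from.
  have sum_ge0 : 0 <= flips_from f.
    by apply: sumr_ge0 => j _; case: ifP; rewrite ?pat_prob_ge0.
  rewrite /high_flip; case: existsP => [[j /andP[m_le_j f_j]] | _] //.
  rewrite (bigD1 j) //= f_j lerDl; apply: sumr_ge0 => i _.
  by case: ifP; rewrite ?pat_prob_ge0.
rewrite /flips_from exchange_big /=; apply: ler_sum => j _.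
by have := prob_flip j; rewrite /prob big_mkcond => ->.
Qed.

Lemma sum_pair_le (A B : pred {ffun 'I_n -> bool}) (C : rel {ffun 'I_n -> bool}) :
  (forall fu fv, C fu fv -> A fu || B fv) ->
  \sum_fu \sum_fv (if C fu fv then P fu * P fv else 0) <= prob A + prob B.
Proof.
move=> CAB.
have sum_cond A' : \sum_f \sum_g (if A' f then P f * P g else 0) = prob A'.
  rewrite /prob [RHS]big_mkcond /=; apply: eq_bigr => f _.
  case: (A' f); last by rewrite big1.
  by rewrite -mulr_sumr sum_pat_prob mulr1.
apply: (@le_trans _ _ (\sum_fu \sum_fv
    ((if A fu then P fu * P fv else 0) + (if B fv then P fv * P fu else 0)))).
  apply: ler_sum => fu _; apply: ler_sum => fv _.
  have PP_ge0 : 0 <= P fu * P fv by rewrite mulr_ge0 ?pat_prob_ge0.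
  rewrite [P fv * _]mulrC; have := CAB fu fv.
  case: (C fu fv) => [/(_ isT) | _]; last by rewrite addr_ge0 //; case: ifP.
  by case: (A fu); case: (B fv) => // _; rewrite ?addr0 ?add0r ?lerDl.
under eq_bigr do rewrite big_split /=.
by rewrite big_split /= sum_cond exchange_big /= sum_cond.
Qed.

End FlipPatterns.

Lemma flipp_prob (R : realFieldType) n (e : 'I_n -> nat) j : 0 <= flipp R e j <= 1.
Proof.
by rewrite /flipp invr_ge0 exprn_ge0 //= invf_le1 ?exprn_gt0 // exprn_ege1 // ler1n.
Qed.

Lemma PrI_le1 (R : realFieldType) n a b (e : 'I_n -> nat) : PrI R a b e <= 1.
Proof.
rewrite /PrI; apply: le_trans
  (sum_pair_le (flipp_prob R e) (A := predT) (B := pred0) _) _ => //.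
by rewrite /prob big_pred0_eq addr0 sum_pat_prob.
Qed.

Lemma PrI_le_high_flips (R : realFieldType) n a b m (e : 'I_n -> nat) :
  (b < 2 ^ n)%N -> (a + 2 ^ m.+1 <= b)%N ->
  PrI R a b e <= 2 * \sum_(j < n | (m <= j)%N) flipp R e j.
Proof.
move=> bn gap.
rewrite /PrI; apply: le_trans
  (sum_pair_le (flipp_prob R e) (A := high_flip m) (B := high_flip m) _) _.
  move=> fu fv; apply: contraLR; rewrite negb_or -leqNgt => /andP[low_u low_v].
  exact: ltnW (read_lt_of_gap bn gap low_u low_v).
have high_le := prob_high_flip_le (flipp_prob R e) m.
by rewrite mulrDl mul1r lerD.
Qed.

Lemma sum_inv_pow2_from (R : realFieldType) m n :
  \sum_(j < n | (m <= j)%N) (2 ^+ (j + 1))^-1 + (2 ^+ maxn m n)^-1 = (2 ^+ m)^-1 :> R.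
Proof.
elim: n => [|n IH]; first by rewrite big_ord0 add0r maxn0.
rewrite big_mkcond big_ord_recr /= -big_mkcond /=.
case: (leqP m n) => [m_le_n | n_lt_m].
  rewrite -addrA -IH (maxn_idPr m_le_n) (maxn_idPr (leqW m_le_n)) addn1.
  congr (_ + _).
  have pow2_neq0 : (2 : R) ^+ n != 0 by rewrite expf_neq0 ?pnatr_eq0.
  by rewrite exprS invfM; field.
by rewrite addr0 -IH (maxn_idPl (ltnW n_lt_m)) (maxn_idPl n_lt_m).
Qed.

Lemma sum_flipp_e_a_lt (R : realFieldType) m n :
  \sum_(j < n | (m <= j)%N) flipp R (@e_a n) j < (2 ^+ m)^-1.
Proof. by rewrite -(sum_inv_pow2_from R m n) ltrDl invr_gt0 exprn_gt0. Qed.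

Lemma exists_pow2_bracket d : (1 < d)%N -> exists m, (2 ^ m.+1 <= d < 2 ^ m.+2)%N.
Proof.
move=> d_gt1; exists (trunc_log 2 d).-1.
by rewrite prednK ?trunc_log_gt0 ?d_gt1 //; apply: trunc_log_bounds; lia.
Qed.

Theorem lemma3 (R : realFieldType) (n a b : nat) :
  (a < b)%N -> (b < 2 ^ n)%N ->
  PrI R a b (@e_a n) < 8 / (b - a)%:R.
Proof.
move=> ab bn; have [d_le1 | d_gt1] := leqP (b - a) 1.
  have -> : (b - a)%N = 1%N by lia.
  by rewrite divr1; apply: le_lt_trans (PrI_le1 _ _ _ _) _; rewrite ltr1n.
have [m /andP[d_ge d_lt]] := exists_pow2_bracket d_gt1.
have gap : (a + 2 ^ m.+1 <= b)%N by lia.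
apply: le_lt_trans (PrI_le_high_flips R (@e_a n) bn gap) _.
apply: (@lt_le_trans _ _ (2 * (2 ^+ m)^-1)); first by rewrite ltr_pM2l // sum_flipp_e_a_lt.
have -> : 2 * (2 ^+ m)^-1 = 8 / (2 ^ m.+2)%:R :> R.
  have pow2_neq0 : (2 : R) ^+ m != 0 by rewrite expf_neq0 ?pnatr_eq0.
  by rewrite natrX !exprS; field.
by rewrite ler_pM2l // lef_pV2 ?posrE ?ltr0n ?expn_gt0 ?subn_gt0 // ler_nat ltnW.
Qed.
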